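(* Let $\tau$ be a primitive, aperiodic substitution and let $g_1,g_2$ be generators for $\tau$. Then $g_1^*\sim_o g_2^*$ if and only if $g_1\sim_G g_2$.
   Context: Let $\mathcal{A}$ be a finite nonempty alphabet, $\mathcal{A}^*$ the finite words over $\mathcal{A}$ (including the empty word), $\mathcal{A}^+$ the nonempty words, $|u|$ the length of $u$. A word $u$ is a factor of $v$ if $v=w_1uw_2$ for some words $w_1,w_2$. A substitution is a map $\tau:\mathcal{A}\to\mathcal{A}^+$ extended to a concatenation-respecting map on words and letterwise to sequences. For $x\in\mathcal{A}^{\mathbb{Z}}$, $x_{[i]}$ denotes the letter at index $i$ and $x_{[i,j]}$ the word $x_{[i]}\cdots x_{[j]}$. The language $\mathcal{L}(\tau)$ is the set of words that are factors of $\tau^n(a)$ for some letter $a$ and some $n\ge1$; $X_\tau=\{x\in\mathcal{A}^{\mathbb{Z}}: x_{[i,j]}\in\mathcal{L}(\tau)\ \forall i\le j\}$. $\tau$ is primitive if there is $n\ge1$ such that every letter $b$ is a factor of $\tau^n(a)$ for every letter $a$, and there is a letter $a$ such that for every $N$ there is $n$ with $|\tau^n(a)|>N$; a primitive $\tau$ is aperiodic if $X_\tau$ is infinite. A generator for $\tau$ is a triple $(v,u,w)$ with $v,u,w\in\mathcal{A}^+$, $u\in\mathcal{L}(\tau)$ and $\tau(u)=vuw$; $v$, $u$, $w$ are its left wing, center and right wing, and its length is $|u|$. Its completion $(v,u,w)^*\in X_\tau$ is the two-sided sequence $\cdots\tau^2(v)\tau(v)vu.w\tau(w)\tau^2(w)\cdots$,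 i.e. the left-infinite word $\cdots\tau^2(v)\tau(v)vu$ occupies the negative indices, ending at index $-1$, and the right-infinite word $w\tau(w)\tau^2(w)\cdots$ occupies the indices $\ge0$, starting at index $0$. If $(v,u,cw)$ is a generator with $c\in\mathcal{A}$, $w\in\mathcal{A}^*$, its right extension is the generator $(v,uc,w\tau(c))$; if $(vc,u,w)$ is a generator with $c\in\mathcal{A}$, $v\in\mathcal{A}^*$, its left extension is the generator $(\tau(c)v,cu,w)$. Two generators $g_1,g_2$ are G related ($g_1\sim_G g_2$) if there is a generator $g_3$ obtainable from $g_1$ and also from $g_2$ by finite (possibly empty) sequences of left and right extensions. For $x,y\in X_\tau$, $x\sim_o y$ (orbit equivalence) means there is $m\in\mathbb{Z}$ with $x_{[i]}=y_{[i+m]}$ for all $i\in\mathbb{Z}$. *)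

From mathcomp Require Import all_boot all_order all_algebra.
Set Implicit Arguments. Unset Strict Implicit. Unset Printing Implicit Defensive.
Import Order.TTheory GRing.Theory Num.Theory.
Local Open Scope ring_scope.

Section Subst.
Variable A : finType.

Definition substitution (tau : A -> seq A) : Prop := forall a, tau a != [::].

Definition subst (tau : A -> seq A) (s : seq A) : seq A := flatten (map tau s).

Definition substn (tau : A -> seq A) (n : nat) (s : seq A) : seq A :=
  iter n (subst tau) s.

Definition in_lang (tau : A -> seq A) (u : seq A) : Prop :=
  exists (a : A) (n : nat), (1 <= n)%N /\ infix u (substn tau n [:: a]).

Definition window (x : int -> A) (i j : int) : seq A :=
  [seq x (i + (k%:Z)) | k <- iota 0 (`|j - i|%N).+1].

Definition in_shift (tau : A -> seq A) (x : int -> A) : Prop :=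
  forall i j : int, i <= j -> in_lang tau (window x i j).

Definition primitive (tau : A -> seq A) : Prop :=
  (exists n : nat, (1 <= n)%N /\ forall a b : A, b \in substn tau n [:: a]) /\
  (exists a : A, forall N : nat, exists n : nat, (N < size (substn tau n [:: a]))%N).

Definition shift_infinite (tau : A -> seq A) : Prop :=
  ~ exists (n : nat) (f : 'I_n -> int -> A),
      forall x, in_shift tau x -> exists i : 'I_n, forall k, x k = f i k.

Definition aperiodic (tau : A -> seq A) : Prop :=
  primitive tau /\ shift_infinite tau.

Record triple := Triple { lwing : seq A; center : seq A; rwing : seq A }.

Definition generator (tau : A -> seq A) (g : triple) : Prop :=
  lwing g != [::] /\ center g != [::] /\ rwing g != [::] /\
  in_lang tau (center g) /\
  subst tau (center g) = lwing g ++ center g ++ rwing g.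

(* right-infinite word w tau(w) tau^2(w) ...: its prefix up to block n *)
Definition right_part (tau : A -> seq A) (w : seq A) (n : nat) : seq A :=
  flatten [seq substn tau k w | k <- iota 0 n.+1].

(* finite suffix tau^(n-1)(v) ... tau(v) v u of the left-infinite word *)
Definition left_part (tau : A -> seq A) (v u : seq A) (n : nat) : seq A :=
  flatten [seq substn tau k v | k <- rev (iota 0 n)] ++ u.

(* The completion (v,u,w)^* : left-infinite part ...tau(v) v u on indices < 0
   (ending at -1), right-infinite part w tau(w) ... on indices >= 0.
   [a0] is only a default letter for [nth]; it is never reached when
   v, w are nonempty. *)
Definition completion (tau : A -> seq A) (a0 : A) (g : triple) : int -> A :=
  fun i =>
    if 0 <= i then nth a0 (right_part tau (rwing g) `|i|%N) `|i|%N
    else nth a0 (rev (left_part tau (lwing g) (center g) `|i|%N)) (`|i|%N).-1.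

Definition ext_step (tau : A -> seq A) (g g' : triple) : Prop :=
  (exists (v u w : seq A) (c : A),
     g = Triple v u (c :: w) /\ g' = Triple v (rcons u c) (w ++ tau c)) \/
  (exists (v u w : seq A) (c : A),
     g = Triple (rcons v c) u w /\ g' = Triple (tau c ++ v) (c :: u) w).

Inductive ext_reach (tau : A -> seq A) : triple -> triple -> Prop :=
  | ext_refl g : ext_reach tau g g
  | ext_next g g' g'' : ext_step tau g g' -> ext_reach tau g' g'' ->
                        ext_reach tau g g''.

Definition G_related (tau : A -> seq A) (g1 g2 : triple) : Prop :=
  exists g3, generator tau g3 /\ ext_reach tau g1 g3 /\ ext_reach tau g2 g3.

Definition orbit_equiv (x y : int -> A) : Prop :=
  exists m : int, forall i : int, x i = y (i + m).

End Subst.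

From mathcomp Require Import all_boot all_order all_algebra.
From mathcomp Require Import zify.
Import Order.TTheory GRing.Theory Num.Theory.
Set Implicit Arguments. Unset Strict Implicit. Unset Printing Implicit Defensive.

(* A left extension leaves the completion unchanged and a right extension
   shifts it by one position, so G-related generators have orbit-equivalent
   completions.  Conversely, if g1^* and g2^* are shifts of each other, right
   extensions make the two completions equal and left extensions then give the
   centers the same length.  Two generators with equal completions and centers
   of equal length coincide: the right-infinite word R = w tau(w) tau^2(w) ...
   satisfies R = w tau(R), so if two wings w1, w2 of different lengths produced
   the same R, then R would be eventually periodic with period |w2| - |w1|.  By
   primitivity every word of the language occurs in that periodic part, so every
   sequence of X_tau would be periodic and X_tau finite, against aperiodicity. *)

Section PeriodicSequences.
Variable A : finType.

Lemma periodic_addz_mul (y : int -> A) (d : nat) :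
  (forall i, y i = y (i + d%:Z)%R) -> forall i (q : int), y (i + q * d%:Z)%R = y i.
Proof.
move=> yP i.
have addn_mul (m : nat) j : y (j + (m * d)%N%:Z)%R = y j.
  by elim: m => [|m IH]; rewrite ?mul0n ?addr0 // mulSnr PoszD addrA -yP.
case=> m; first by rewrite -PoszM addn_mul.
by rewrite -[in RHS](subrK (Posz (m.+1 * d)) i) addn_mul NegzE PoszM mulNr.
Qed.

Lemma periodic_cover (d : nat) : (0 < d)%N ->
  exists (n : nat) (f : 'I_n -> int -> A),
    forall y : int -> A, (forall i, y i = y (i + d%:Z)%R) -> exists k : 'I_n, y =1 f k.
Proof.
case: d => // d _; pose T := {ffun 'I_d.+1 -> A}.
exists #|T|, (fun k i => (enum_val k : T) (inord `|(i %% d.+1)%Z|%N)).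
move=> y yP; exists (enum_rank [ffun j : 'I_d.+1 => y j]) => i.
have mod_ge0 : (0 <= (i %% d.+1)%Z)%R by apply: modz_ge0.
rewrite enum_rankK ffunE inordK; last by rewrite -ltz_nat gez0_abs // ltz_pmod.
by rewrite gez0_abs // {1}(divz_eq i d.+1) addrC periodic_addz_mul.
Qed.

End PeriodicSequences.

Section Substitution.
Variable A : finType.
Variable a0 : A.
Variable tau : A -> seq A.
Hypothesis tau_nonnil : substitution tau.

Local Notation sub := (subst tau).
Local Notation subN := (substn tau).

Lemma subst_cat s t : sub (s ++ t) = sub s ++ sub t.
Proof. by rewrite /subst map_cat flatten_cat. Qed.

Lemma subst1 c : sub [:: c] = tau c.
Proof. exact: cats0. Qed.

Lemma substn_cat n s t : subN n (s ++ t) = subN n s ++ subN n t.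
Proof. by elim: n => //= n ->; rewrite subst_cat. Qed.

Lemma substnD m n s : subN (m + n) s = subN m (subN n s).
Proof. exact: iterD. Qed.

Lemma substn_tau n c : subN n (tau c) = subN n.+1 [:: c].
Proof. by rewrite -addn1 substnD /= subst1. Qed.

Lemma tau_cat_nonnil c s : tau c ++ s != [::].
Proof. by case: (tau c) (tau_nonnil c). Qed.

Lemma cat_tau_nonnil c s : s ++ tau c != [::].
Proof. by rewrite -size_eq0 size_cat addnC -size_cat size_eq0 tau_cat_nonnil. Qed.

Lemma size_subst s : size s <= size (sub s).
Proof.
elim: s => //= c s IH; rewrite [sub _]/= size_cat.
by case: (tau c) (tau_nonnil c) => //= b l _; rewrite addSn ltnS (leq_trans IH) ?leq_addl.
Qed.

Lemma size_substn n s : size s <= size (subN n s).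
Proof. by elim: n => //= n IH; rewrite (leq_trans IH) ?size_subst. Qed.

Lemma infix_substn n s t : infix s t -> infix (subN n s) (subN n t).
Proof.
move/infixP=> [p [q ->]]; apply/infixP; exists (subN n p), (subN n q).
by rewrite !substn_cat.
Qed.

Lemma in_lang_infix u t : in_lang tau t -> infix u t -> in_lang tau u.
Proof. by move=> [a [n [n_gt0 tP]]] ut; exists a, n; rewrite (infix_trans ut tP). Qed.

Lemma in_lang_subst u : in_lang tau u -> in_lang tau (sub u).
Proof. by move=> [a [n [n_gt0 uP]]]; exists a, n.+1; rewrite (infix_substn 1 uP). Qed.

Lemma nth_subst_take s k t : t < size (take k s) ->
  nth a0 (sub s) t = nth a0 (sub (take k s)) t.
Proof.
move=> t_lt; rewrite -{1}(cat_take_drop k s) subst_cat nth_cat.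
by rewrite (leq_trans t_lt (size_subst _)).
Qed.

Lemma right_part0 w : right_part tau w 0 = w.
Proof. exact: cats0. Qed.

Lemma right_partS w n : right_part tau w n.+1 = right_part tau w n ++ subN n.+1 w.
Proof. by rewrite /right_part -addn1 iotaD map_cat flatten_cat /= cats0. Qed.

Lemma right_partSl w n : right_part tau w n.+1 = w ++ sub (right_part tau w n).
Proof.
elim: n => [|n IH]; first by rewrite right_partS !right_part0.
by rewrite [LHS]right_partS {1}IH -catA [in RHS]right_partS subst_cat.
Qed.

Lemma right_part_cons c w n :
  right_part tau (c :: w) n.+1 = c :: right_part tau (w ++ tau c) n ++ subN n.+1 w.
Proof.
elim: n => [|n IH]; first by rewrite right_partS !right_part0 /= -catA.
rewrite right_partS IH right_partS -[c :: w]/([:: c] ++ w) !substn_cat.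
by rewrite substn_tau /= -!catA.
Qed.

Lemma prefix_right_part w : {homo right_part tau w : m n / m <= n >-> prefix m n}.
Proof.
apply: homo_leq; [exact: prefix_refl | exact: prefix_trans |].
by move=> n; rewrite right_partS prefix_prefix.
Qed.

Lemma size_right_part w n : w != [::] -> n < size (right_part tau w n).
Proof.
move=> w_nonnil; elim: n => [|n IH]; first by rewrite right_part0 lt0n size_eq0.
rewrite right_partS size_cat -addn1 leq_add //.
by rewrite (leq_trans _ (size_substn _ _)) // lt0n size_eq0.
Qed.

Lemma left_part0 v u : left_part tau v u 0 = u.
Proof. by []. Qed.

Lemma left_partS v u n : left_part tau v u n.+1 = subN n v ++ left_part tau v u n.
Proof. by rewrite /left_part -addn1 iotaD rev_cat /= catA. Qed.

Lemma left_part_rcons v c u n :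
  left_part tau (rcons v c) u n.+1 = subN n v ++ left_part tau (tau c ++ v) (c :: u) n.
Proof.
elim: n => [|n IH]; first by rewrite left_partS /= cat_rcons.
by rewrite left_partS IH left_partS -cats1 !substn_cat substn_tau /= -!catA.
Qed.

Lemma left_part_rcons_center v u c n :
  left_part tau v (rcons u c) n = rcons (left_part tau v u n) c.
Proof. by rewrite /left_part rcons_cat. Qed.

Lemma suffix_left_part v u : {homo left_part tau v u : m n / m <= n >-> suffix m n}.
Proof.
apply: homo_leq; [exact: suffix_refl | exact: suffix_trans |].
by move=> n; rewrite left_partS suffix_suffix.
Qed.

Lemma size_left_part v u n : v != [::] -> n <= size (left_part tau v u n).
Proof.
move=> v_nonnil; elim: n => // n IH; rewrite left_partS size_cat -addn1 addnC leq_add //.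
by rewrite (leq_trans _ (size_substn _ _)) // lt0n size_eq0.
Qed.

Lemma nth_prefix s t i : prefix s t -> i < size s -> nth a0 s i = nth a0 t i.
Proof. by move=> /prefixP [s' ->] i_lt; rewrite nth_cat i_lt. Qed.

Lemma nth_cat_size s t k : nth a0 (s ++ t) (size s + k) = nth a0 t k.
Proof. by rewrite nth_cat ltnNge leq_addr addKn. Qed.

Definition right_word w t := nth a0 (right_part tau w t) t.

(* [left_word v u t] is the letter of the completion at index [-t-1]. *)
Definition left_word v u t := nth a0 (rev (left_part tau v u t.+1)) t.

Lemma nth_right_part w n t : w != [::] -> t < size (right_part tau w n) ->
  nth a0 (right_part tau w n) t = right_word w t.
Proof.
move=> w_nonnil t_lt; have t_ltt := size_right_part t w_nonnil.
have [nt|/ltnW tn] := leqP n t.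
  by rewrite (nth_prefix (prefix_right_part w nt)).
by rewrite [RHS](nth_prefix (prefix_right_part w tn)).
Qed.

Lemma nth_rev_left_part v u n t : v != [::] -> t < size (left_part tau v u n) ->
  nth a0 (rev (left_part tau v u n)) t = left_word v u t.
Proof.
move=> v_nonnil t_lt; have t_ltt := size_left_part u t.+1 v_nonnil.
have pre m k : m <= k -> prefix (rev (left_part tau v u m)) (rev (left_part tau v u k)).
  by move=> mk; rewrite prefix_rev suffix_left_part.
have [nt|/ltnW tn] := leqP n t.+1.
  by rewrite (nth_prefix (pre _ _ nt)) ?size_rev.
by rewrite [RHS](nth_prefix (pre _ _ tn)) ?size_rev.
Qed.

Lemma completion_pos g n : completion tau a0 g (Posz n) = right_word (rwing g) n.
Proof. by []. Qed.

Lemma completion_neg g n : completion tau a0 g (Negz n) = left_word (lwing g) (center g) n.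
Proof. by []. Qed.

Lemma take_right_part w n k : w != [::] -> k <= size (right_part tau w n) ->
  take k (right_part tau w n) = mkseq (right_word w) k.
Proof.
move=> w_nonnil k_le; apply: (@eq_from_nth _ a0); first by rewrite size_takel ?size_mkseq.
move=> t; rewrite size_takel // => t_lt.
by rewrite nth_take // nth_mkseq // nth_right_part // (leq_trans t_lt).
Qed.

Lemma wing_mkseq w : w != [::] -> w = mkseq (right_word w) (size w).
Proof. by move=> w_nonnil; rewrite -(@take_right_part _ 0) ?right_part0 ?take_size. Qed.

Lemma rev_center_mkseq v u : v != [::] -> rev u = mkseq (left_word v u) (size u).
Proof.
move=> v_nonnil; apply: (@eq_from_nth _ a0); rewrite size_rev ?size_mkseq // => t t_lt.
by rewrite nth_mkseq // -(@nth_rev_left_part _ _ 0) ?left_part0.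
Qed.

Lemma right_word_cons c w t : right_word (c :: w) t.+1 = right_word (w ++ tau c) t.
Proof.
rewrite /right_word right_part_cons /= nth_cat size_right_part //.
by rewrite cat_tau_nonnil.
Qed.

Lemma left_word_rcons0 v u c : left_word v (rcons u c) 0 = c.
Proof. by rewrite /left_word left_part_rcons_center rev_rcons. Qed.

Lemma left_word_rcons v u c t : v != [::] ->
  left_word v (rcons u c) t.+1 = left_word v u t.
Proof.
move=> v_nonnil; rewrite /left_word left_part_rcons_center rev_rcons /=.
by rewrite nth_rev_left_part // (leq_trans _ (size_left_part _ _ v_nonnil)).
Qed.

Lemma left_word_cat_tau v c u :
  left_word (tau c ++ v) (c :: u) =1 left_word (rcons v c) u.
Proof.
move=> t; have rcons_nonnil : rcons v c != [::] by rewrite -size_eq0 size_rcons.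
rewrite -[RHS](@nth_rev_left_part _ _ t.+2) ?(leq_trans _ (size_left_part _ _ _)) //.
by rewrite left_part_rcons rev_cat nth_cat size_rev size_left_part ?tau_cat_nonnil.
Qed.

Lemma completion_right_ext v u c w : v != [::] ->
  completion tau a0 (Triple v (rcons u c) (w ++ tau c)) =1
  (fun i => completion tau a0 (Triple v u (c :: w)) (i + 1)%R).
Proof.
move=> v_nonnil [n|[|n]] /=.
- by rewrite (_ : (Posz n + 1)%R = Posz n.+1) ?completion_pos ?right_word_cons //; lia.
- by rewrite completion_neg left_word_rcons0.
- by rewrite (_ : (Negz n.+1 + 1)%R = Negz n) ?completion_neg ?left_word_rcons // !NegzE; lia.
Qed.

Lemma completion_left_ext v c u w :
  completion tau a0 (Triple (tau c ++ v) (c :: u) w) =1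
  completion tau a0 (Triple (rcons v c) u w).
Proof. by case=> n //=; rewrite !completion_neg left_word_cat_tau. Qed.

Lemma generator_right_ext v u c w : generator tau (Triple v u (c :: w)) ->
  generator tau (Triple v (rcons u c) (w ++ tau c)).
Proof.
move=> [/= v_nonnil [_ [_ [u_lang uE]]]].
have ucE : sub (rcons u c) = v ++ rcons u c ++ (w ++ tau c).
  by rewrite -cats1 subst_cat uE subst1 -!catA.
split=> //=; split; first by rewrite -size_eq0 size_rcons.
split; first by rewrite cat_tau_nonnil.
split=> //; apply: in_lang_infix (in_lang_subst u_lang) _.
by rewrite uE; apply/infixP; exists v, w; rewrite -cats1 -!catA.
Qed.

Lemma generator_left_ext v c u w : generator tau (Triple (rcons v c) u w) ->
  generator tau (Triple (tau c ++ v) (c :: u) w).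
Proof.
move=> [_ [/= _ [w_nonnil [u_lang uE]]]].
split; first by rewrite tau_cat_nonnil.
do 2!split=> //; split; last first.
  by rewrite -[c :: u]/([:: c] ++ u) subst_cat subst1 uE -cats1 -!catA.
apply: in_lang_infix (in_lang_subst u_lang) _.
by rewrite uE; apply/infixP; exists v, w; rewrite -cats1 -!catA.
Qed.

Lemma ext_reach_trans g1 g2 g3 :
  ext_reach tau g1 g2 -> ext_reach tau g2 g3 -> ext_reach tau g1 g3.
Proof. by elim=> // g g' g'' step _ IH /IH; apply: ext_next. Qed.

Lemma ext_reach_rstep g1 g2 g3 :
  ext_reach tau g1 g2 -> ext_step tau g2 g3 -> ext_reach tau g1 g3.
Proof.
by move=> reach12 step23; apply: ext_reach_trans reach12 (ext_next step23 (ext_refl _ _)).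
Qed.

Lemma ext_reach_completion g g' : ext_reach tau g g' -> lwing g != [::] ->
  exists r : nat, completion tau a0 g' =1 (fun i => completion tau a0 g (i + r%:Z)%R).
Proof.
elim=> [g0 _|g0 g1 g2 step _ IH]; first by exists 0 => i; rewrite addr0.
case: step => [] [v [u [w [c [-> g1E]]]]] /= v_nonnil; subst g1.
- have [r rP] := IH v_nonnil; exists r.+1 => i.
  by rewrite rP completion_right_ext // -addrA (_ : (r%:Z + 1 = r.+1%:Z)%R) //; lia.
- have [r rP] := IH (tau_cat_nonnil _ _); exists r => i.
  by rewrite rP completion_left_ext.
Qed.

Lemma right_ext_iter g r : generator tau g ->
  exists g', [/\ ext_reach tau g g', generator tau g',
    size (center g') = size (center g) + r &
    completion tau a0 g' =1 (fun i => completion tau a0 g (i + r%:Z)%R)].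
Proof.
move=> gen_g; elim: r => [|r [[v u [|c w]] [reach_g' gen_g' size_g' comp_g']]].
- by exists g; split=> [||//|i]; rewrite ?addn0 ?addr0 //; apply: ext_refl.
- by case: gen_g' => _ [_ []].
exists (Triple v (rcons u c) (w ++ tau c)); split.
- by apply: ext_reach_rstep reach_g' _; left; exists v, u, w, c.
- exact: generator_right_ext.
- by rewrite size_rcons size_g' addnS.
move=> i; rewrite completion_right_ext; last by case: gen_g'.
by rewrite comp_g' -addrA (_ : (1 + r%:Z = r.+1%:Z)%R) //; lia.
Qed.

Lemma left_ext_iter g l : generator tau g ->
  exists g', [/\ ext_reach tau g g', generator tau g',
    size (center g') = size (center g) + l & completion tau a0 g' =1 completion tau a0 g].
Proof.
move=> gen_g; elim: l => [|l [[v u w] [reach_g' gen_g' size_g' comp_g']]].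
- by exists g; split; rewrite ?addn0 //; apply: ext_refl.
case/lastP: v reach_g' gen_g' size_g' comp_g' => [|v c] reach_g' gen_g' size_g' comp_g'.
  by case: gen_g'.
exists (Triple (tau c ++ v) (c :: u) w); split.
- by apply: ext_reach_rstep reach_g' _; right; exists v, u, w, c.
- exact: generator_left_ext.
- by rewrite /= size_g' addnS.
- by move=> i; rewrite completion_left_ext comp_g'.
Qed.

Lemma size_window (x : int -> A) i j : size (window x i j) = (`|j - i|%N).+1.
Proof. by rewrite size_map size_iota. Qed.

Lemma nth_window (x : int -> A) i j k : k <= `|j - i|%N ->
  nth a0 (window x i j) k = x (i + k%:Z)%R.
Proof. by move=> k_le; rewrite (nth_map 0) ?size_iota // nth_iota. Qed.

(* The right-infinite word [R] of the wing [w] satisfies [R = w tau(R)]. *)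
Lemma right_word_size_add w n t : w != [::] -> t <= n ->
  right_word w (size w + t) = nth a0 (sub (right_part tau w n)) t.
Proof.
move=> w_nonnil t_le; have t_lt := leq_ltn_trans t_le (size_right_part n w_nonnil).
rewrite -(@nth_right_part _ n.+1) // right_partSl ?nth_cat_size // size_cat ltn_add2l.
exact: leq_trans t_lt (size_subst _).
Qed.

Lemma right_word_size_add_eq w1 w2 t : w1 != [::] -> w2 != [::] ->
  right_word w1 =1 right_word w2 -> right_word w1 (size w1 + t) = right_word w2 (size w2 + t).
Proof.
move=> w1_nonnil w2_nonnil eq12.
have take_lt w : w != [::] -> t < size (take t.+1 (right_part tau w t)).
  by move=> w_nonnil; rewrite size_takel ?size_right_part.
rewrite !(right_word_size_add _ (leqnn t)) //.
rewrite (@nth_subst_take _ t.+1) ?take_lt // [RHS](@nth_subst_take _ t.+1) ?take_lt //.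
by rewrite !take_right_part ?size_right_part // (eq_mkseq eq12).
Qed.

Lemma right_word_periodic w1 w2 i : w1 != [::] -> w2 != [::] ->
  right_word w1 =1 right_word w2 -> size w1 <= size w2 -> size w1 <= i ->
  right_word w1 i = right_word w1 (i + (size w2 - size w1)).
Proof.
move=> w1_nonnil w2_nonnil eq12 le12 /subnKC <-.
rewrite (right_word_size_add_eq _ w1_nonnil w2_nonnil eq12) eq12; congr right_word; lia.
Qed.

Section Aperiodic.
Hypothesis tau_primitive : primitive tau.
Hypothesis shift_inf : shift_infinite tau.

(* By primitivity every letter occurs in [tau^N] of the first letter of [w]. *)
Lemma right_word_occurs w u : w != [::] -> in_lang tau u ->
  exists2 j, size w <= j & forall k, k < size u -> nth a0 u k = right_word w (j + k).
Proof.
case: tau_primitive => [[N [_ all_in]] _] w_nonnil [a [n [n_gt0 u_inf]]].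
case: n n_gt0 u_inf => // n _ u_inf.
have wb : infix [:: head a0 w] w by case: w w_nonnil => // b w' _; rewrite infix1s mem_head.
have : infix u (subN (n.+1 + N) w).
  rewrite (infix_trans u_inf) // substnD infix_substn //.
  by rewrite (infix_trans _ (infix_substn N wb)) ?infix1s.
rewrite addSn => /infixP [p [q blockE]].
have size_w : size w <= size (right_part tau w (n + N)).
  by rewrite -{1}(right_part0 w) size_prefix ?prefix_right_part.
exists (size (right_part tau w (n + N) ++ p)).
  by rewrite size_cat (leq_trans size_w) ?leq_addr.
move=> k k_lt; rewrite -(@nth_right_part _ (n + N).+1) // right_partS blockE.
  by rewrite (catA (right_part tau w (n + N)) p) nth_cat_size nth_cat k_lt.
by rewrite !size_cat; lia.
Qed.

Lemma shift_pair_occurs w y i d : w != [::] -> in_shift tau y ->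
  exists2 j, size w <= j & y i = right_word w j /\ y (i + d%:Z)%R = right_word w (j + d).
Proof.
move=> w_nonnil y_shift; have i_le : (i <= i + d%:Z)%R by rewrite lerDl.
have [j j_ge jP] := right_word_occurs w_nonnil (y_shift _ _ i_le).
have dE : `|(i + d%:Z - i)%R|%N = d by rewrite addrC addKr.
exists j => //; split; last by rewrite -jP ?size_window ?dE // nth_window ?dE.
by rewrite -(addn0 j) -jP ?size_window ?dE // nth_window ?addr0.
Qed.

Lemma right_word_size_inj w1 w2 : w1 != [::] -> w2 != [::] ->
  right_word w1 =1 right_word w2 -> size w1 = size w2.
Proof.
wlog le12 : w1 w2 / size w1 <= size w2.
  move=> gen w1_nonnil w2_nonnil eq12.
  have [le12|/ltnW le21] := leqP (size w1) (size w2); first exact: gen.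
  by apply/esym/gen => // t; rewrite eq12.
move=> w1_nonnil w2_nonnil eq12; apply/eqP; rewrite eqn_leq le12 leqNgt; apply/negP=> lt12.
have d_gt0 : 0 < size w2 - size w1 by rewrite subn_gt0.
have [n [f cover]] := periodic_cover A d_gt0.
apply: shift_inf; exists n, f => y y_shift; apply: cover => i.
have [j j_ge [-> ->]] := shift_pair_occurs i (size w2 - size w1) w1_nonnil y_shift.
exact: right_word_periodic.
Qed.

Lemma generator_eq g1 g2 : generator tau g1 -> generator tau g2 ->
  completion tau a0 g1 =1 completion tau a0 g2 ->
  size (center g1) = size (center g2) -> g1 = g2.
Proof.
case: g1 g2 => [v1 u1 w1] [v2 u2 w2] [/= v1_nonnil [_ [w1_nonnil [_ u1E]]]].
move=> [/= v2_nonnil [_ [w2_nonnil [_ u2E]]]] comp12 /= size_u.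
have eqR : right_word w1 =1 right_word w2 := fun t => comp12 (Posz t).
have eqL : left_word v1 u1 =1 left_word v2 u2 := fun t => comp12 (Negz t).
have w12 : w1 = w2.
  rewrite (wing_mkseq w1_nonnil) (wing_mkseq w2_nonnil) (eq_mkseq eqR).
  by rewrite (right_word_size_inj w1_nonnil w2_nonnil eqR).
have u12 : u1 = u2.
  apply: (can_inj revK); rewrite (rev_center_mkseq u1 v1_nonnil).
  by rewrite (rev_center_mkseq u2 v2_nonnil) size_u (eq_mkseq eqL).
subst w2 u2; have v12E := etrans (esym u1E) u2E.
have size_v : size v1 = size v2 by have := congr1 size v12E; rewrite !size_cat => /addIn.
by move/eqP: v12E; rewrite eqseq_cat // => /andP [/eqP <-].
Qed.

Lemma G_related_of_shifted g1 g2 (r1 r2 : nat) : generator tau g1 -> generator tau g2 ->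
  (forall i, completion tau a0 g1 (i + r1%:Z)%R = completion tau a0 g2 (i + r2%:Z)%R) ->
  G_related tau g1 g2.
Proof.
move=> gen1 gen2 shift12.
have [h1 [reach1 gen_h1 _ comp_h1]] := right_ext_iter r1 gen1.
have [h2 [reach2 gen_h2 _ comp_h2]] := right_ext_iter r2 gen2.
pose s := maxn (size (center h1)) (size (center h2)).
have [k1 [reach_k1 gen_k1 size_k1 comp_k1]] := left_ext_iter (s - size (center h1)) gen_h1.
have [k2 [reach_k2 gen_k2 size_k2 comp_k2]] := left_ext_iter (s - size (center h2)) gen_h2.
have k12 : k1 = k2.
  apply: generator_eq => // [i|]; first by rewrite comp_k1 comp_k2 comp_h1 comp_h2.
  by rewrite size_k1 size_k2 !subnKC ?leq_maxl ?leq_maxr.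
exists k1; split=> //; split; first exact: ext_reach_trans reach1 reach_k1.
by rewrite k12; exact: ext_reach_trans reach2 reach_k2.
Qed.

End Aperiodic.

Lemma orbit_equiv_of_G_related g1 g2 : generator tau g1 -> generator tau g2 ->
  G_related tau g1 g2 -> orbit_equiv (completion tau a0 g1) (completion tau a0 g2).
Proof.
move=> [v1_nonnil _] [v2_nonnil _] [g3 [_ [reach1 reach2]]].
have [r1 comp1] := ext_reach_completion reach1 v1_nonnil.
have [r2 comp2] := ext_reach_completion reach2 v2_nonnil.
exists (r2%:Z - r1%:Z)%R => i.
by rewrite -[i in LHS](subrK (Posz r1)) -comp1 comp2 addrAC addrA.
Qed.

Lemma G_related_of_orbit_equiv g1 g2 : primitive tau -> shift_infinite tau ->
  generator tau g1 -> generator tau g2 ->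
  orbit_equiv (completion tau a0 g1) (completion tau a0 g2) -> G_related tau g1 g2.
Proof.
move=> prim inf gen1 gen2 [[k|k] shift12].
  by apply: (@G_related_of_shifted _ _ _ _ 0 k) => // i; rewrite addr0.
apply: (@G_related_of_shifted _ _ _ _ k.+1 0) => // i.
by rewrite shift12 addr0 NegzE addrK.
Qed.

End Substitution.

Theorem mainTheorem5 (A : finType) (a0 : A) (tau : A -> seq A)
  (Htau : substitution tau) (Hprim : primitive tau) (Hap : aperiodic tau)
  (g1 g2 : triple A) (Hg1 : generator tau g1) (Hg2 : generator tau g2) :
  orbit_equiv (completion tau a0 g1) (completion tau a0 g2) <->
  G_related tau g1 g2.
Proof.
split; first exact: G_related_of_orbit_equiv Hprim Hap.2 Hg1 Hg2.
exact: orbit_equiv_of_G_related.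
Qed.
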